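(* For all $n,k\in\mathbb{N}$, the logics $L^k(\mathcal{Q}^{\mathrm{b}}_n)$ and $\mathcal{L}^{k}_{\infty}(\mathcal{Q}_n)$ are equivalent: for every relational signature $\sigma$, every formula of either logic over $\sigma$ is equivalent (on all $\sigma$-structures and all assignments of its free variables) to a formula of the other logic with the same free variables.
   Context: Generalised quantifiers: for a finite relational signature $\tau$ and a class $K$ of $\tau$-structures closed under isomorphism, $Q_K$ has arity equal to the maximum arity of a relation in $\tau$; $Q_K\bar x\,(\phi_R(\bar x_R,\bar y_R))_{R\in\tau}$ holds in $(\mathcal{A},\bar a)$ iff the $\tau$-structure with universe $A$ and each $R$ interpreted as the set of tuples $\bar b$ with $\mathcal{A}\models\phi_R(\bar b,\bar a)$ belongs to $K$. $K$ is bijection-closed if whenever $\mathcal{C}\in K$ and $f:\mathcal{C}\to\mathcal{D}$ is a bijective homomorphism, $\mathcal{D}\in K$. $\mathcal{L}^{k}_{\infty}(\mathcal{Q}_n)$: formulas in the $k$ variables $x_1,\dots,x_k$ of infinitary logic (atomic formulas, negation, conjunctions and disjunctions over arbitrary sets, $\exists$, $\forall$) extended with all generalised quantifiers $Q_K$ of arity $n$. $L^k(\mathcal{Q}^{\mathrm{b}}_n)$: the smallest class of $k$-variable formulas containing atomic and negated atomic formulas, closed under arbitrary conjunctions and disjunctions and under application of $Q_K$ for every bijection-closed class $K$ with $Q_K$ of arity $n$ (negation is only allowed on atoms). *)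

From mathcomp Require Import all_boot.


Record structure (S : Type) (ar : S -> nat) := Structure {
  dom : finType;
  rel : forall R : S, ('I_(ar R) -> dom) -> Prop }.
Arguments dom {S ar} s.
Arguments rel {S ar} s R _.
Arguments Structure {S} ar dom rel.

Definition is_iso (S : Type) (ar : S -> nat) (C D : structure S ar)
  (f : dom C -> dom D) : Prop :=
  bijective f /\ forall (R : S) (t : 'I_(ar R) -> dom C), rel C R t <-> rel D R (f \o t).

Definition is_bij_hom (S : Type) (ar : S -> nat) (C D : structure S ar)
  (f : dom C -> dom D) : Prop :=
  bijective f /\ forall (R : S) (t : 'I_(ar R) -> dom C), rel C R t -> rel D R (f \o t).

Definition iso_closed (S : Type) (ar : S -> nat) (K : structure S ar -> Prop) : Prop :=
  forall (C D : structure S ar) (f : dom C -> dom D), is_iso S ar C D f -> K C -> K D.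

Definition bij_closed (S : Type) (ar : S -> nat) (K : structure S ar -> Prop) : Prop :=
  forall (C D : structure S ar) (f : dom C -> dom D), is_bij_hom S ar C D f -> K C -> K D.

Definition qarity (tau : finType) (ar : tau -> nat) : nat := \max_(R : tau) ar R.

Section Syntax.
Variables (S : Type) (arS : S -> nat) (k : nat).

(* FQ tau ar K vars psi  is  Q_K xbar (psi_R(xbar_R, ...))_{R in tau},
   where vars R : 'I_(ar R) -> 'I_k is the tuple of variables xbar_R bound in psi_R. *)
Inductive fml : Type :=
| FEq  : 'I_k -> 'I_k -> fml
| FRel : forall R : S, ('I_(arS R) -> 'I_k) -> fml
| FNot : fml -> fml
| FAnd : forall I : Type, (I -> fml) -> fml
| FOr  : forall I : Type, (I -> fml) -> fml
| FEx  : 'I_k -> fml -> fml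
| FAll : 'I_k -> fml -> fml
| FQ   : forall (tau : finType) (ar : tau -> nat) (K : structure tau ar -> Prop),
           (forall R : tau, 'I_(ar R) -> 'I_k) -> (tau -> fml) -> fml.

Definition upd (T : Type) (s : 'I_k -> T) (i : 'I_k) (a : T) : 'I_k -> T :=
  fun j => if j == i then a else s j.

(* For the quantifier case the tuple b belongs to the defined
   relation R iff psi_R holds under an assignment that agrees with s off the
   variables vars R and sends vars R j to b j (the usual reading of
   "A |= psi_R(b, a)"; if vars R has repetitions, b must respect them). *)
Fixpoint sat (A : structure S arS) (phi : fml) (s : 'I_k -> dom A) {struct phi} : Prop :=
  match phi with
  | FEq i j => s i = s j
  | FRel R v => rel A R (s \o v)
  | FNot p => ~ sat A p s
  | FAnd J F => forall x : J, sat A (F x) s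
  | FOr J F => exists x : J, sat A (F x) s
  | FEx i p => exists a : dom A, sat A p (upd (dom A) s i a)
  | FAll i p => forall a : dom A, sat A p (upd (dom A) s i a)
  | FQ tau ar K vars psi =>
      K (@Structure tau ar (dom A)
           (fun R b => exists s' : 'I_k -> dom A,
               (forall v, (forall j, vars R j <> v) -> s' v = s v) /\
               (forall j, s' (vars R j) = b j) /\
               sat A (psi R) s'))
  end.

Fixpoint free (v : 'I_k) (phi : fml) : Prop :=
  match phi with
  | FEq i j => v = i \/ v = j
  | FRel R w => exists j, w j = v
  | FNot p => free v p
  | FAnd J F => exists x : J, free v (F x)
  | FOr J F => exists x : J, free v (F x)
  | FEx i p => v <> i /\ free v p
  | FAll i p => v <> i /\ free v p
  | FQ tau ar K vars psi => exists R : tau, (forall j, vars R j <> v) /\ free v (psi R)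
  end.

Definition is_atomic (phi : fml) : Prop :=
  match phi with FEq _ _ | FRel _ _ => True | _ => False end.

Fixpoint in_Linf (n : nat) (phi : fml) : Prop :=
  match phi with
  | FEq _ _ | FRel _ _ => True
  | FNot p => in_Linf n p
  | FAnd J F | FOr J F => forall x : J, in_Linf n (F x)
  | FEx _ p | FAll _ p => in_Linf n p
  | FQ tau ar K vars psi =>
      iso_closed tau ar K /\ qarity tau ar = n /\ forall R : tau, in_Linf n (psi R)
  end.

Fixpoint in_Lb (n : nat) (phi : fml) : Prop :=
  match phi with
  | FEq _ _ | FRel _ _ => True
  | FNot p => is_atomic p
  | FAnd J F | FOr J F => forall x : J, in_Lb n (F x)
  | FEx _ _ | FAll _ _ => False
  | FQ tau ar K vars psi =>
      bij_closed tau ar K /\ qarity tau ar = n /\ forall R : tau, in_Lb n (psi R)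
  end.

Definition same_free (phi psi : fml) : Prop := forall v, free v phi <-> free v psi.

Definition equivalent (phi psi : fml) : Prop :=
  forall (A : structure S arS) (s : 'I_k -> dom A), sat A phi s <-> sat A psi s.

End Syntax.

Arguments FEq {S arS k}.
Arguments FRel {S arS k}.
Arguments FNot {S arS k}.
Arguments FAnd {S arS k}.
Arguments FOr {S arS k}.
Arguments FEx {S arS k}.
Arguments FAll {S arS k}.
Arguments FQ {S arS k}.
Arguments sat {S arS k} A phi s.
Arguments free {S arS k} v phi.
Arguments in_Linf {S arS k} n phi.
Arguments in_Lb {S arS k} n phi.
Arguments same_free {S arS k} phi psi.
Arguments equivalent {S arS k} phi psi.

From mathcomp Require Import all_boot.
From Stdlib Require Import Classical FunctionalExtensionality.

(* Push negations down to the atoms.  An existential or universal quantifier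
   over x becomes Q_K for the class K of structures whose n-ary relation is
   nonempty, resp. contains every constant tuple, bound to the tuple (x,...,x);
   both classes are monotone, hence bijection-closed.  A quantifier Q_K with K
   isomorphism-closed becomes a quantifier over the doubled signature in which
   the copy R+ is defined by psi_R and the copy R- by the translation of
   ~ psi_R; its class is the closure under bijective homomorphisms of the
   structures whose two copies are complementary and form a member of K, and
   on complementary interpretations it agrees with K.  Conversely every
   bijection-closed class is isomorphism-closed, so L^k(Q^b_n) is already a
   fragment of L^k_infty(Q_n). *)

Lemma is_iso_bij_hom (S : Type) (ar : S -> nat) C D f :
  is_iso S ar C D f -> is_bij_hom S ar C D f.
Proof. by case=> f_bij f_hom; split=> // R t /f_hom. Qed.

Lemma bij_closed_iso_closed (S : Type) (ar : S -> nat) K :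
  bij_closed S ar K -> iso_closed S ar K.
Proof. by move=> K_bij C D f /is_iso_bij_hom; apply: K_bij. Qed.

Lemma is_iso_sym (S : Type) (ar : S -> nat) C D f :
  is_iso S ar C D f -> exists g, is_iso S ar D C g.
Proof.
case=> -[g fK gK] f_iso; exists g; split; first by exists f.
move=> R t; have := f_iso R (g \o t).
have -> : f \o (g \o t) = t by apply: functional_extensionality => j /=; rewrite gK.
by move=> ->.
Qed.

Lemma iso_closedN (S : Type) (ar : S -> nat) K :
  iso_closed S ar K -> iso_closed S ar (fun C => ~ K C).
Proof.
move=> K_iso C D f /is_iso_sym[g g_iso] notKC KD; exact/notKC/(K_iso D C g).
Qed.

Lemma in_Lb_in_Linf (S : Type) (arS : S -> nat) (k n : nat) (phi : fml S arS k) :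
  in_Lb n phi -> in_Linf n phi.
Proof.
elim: phi => //= [p _|J F IH|J F IH|tau ar K vars psi IH].
- by case: p.
- by move=> F_Lb x; apply: IH.
- by move=> F_Lb x; apply: IH.
- case=> K_bij [ar_n psi_Lb]; split; first exact: bij_closed_iso_closed.
  by split=> // R; apply: IH.
Qed.

Section DefinedRelation.
Context {k : nat} {T : Type} (s : 'I_k -> T) {m : nat} (w : 'I_m -> 'I_k).

(* A tuple can only be read off an assignment along [w] if it repeats its
   entries wherever [w] repeats a variable. *)
Definition compatible (b : 'I_m -> T) : Prop := forall j j', w j = w j' -> b j = b j'.

Definition defined_rel (Q : ('I_k -> T) -> Prop) (b : 'I_m -> T) : Prop :=
  exists s' : 'I_k -> T, (forall v, (forall j, w j <> v) -> s' v = s v) /\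
    (forall j, s' (w j) = b j) /\ Q s'.

Lemma defined_rel_compatible Q b : defined_rel Q b -> compatible b.
Proof. by case=> s' [_ [s'w _]] j j' ww'; rewrite -!s'w ww'. Qed.

Lemma reassign_uniq b s1 s2 :
  (forall v, (forall j, w j <> v) -> s1 v = s v) -> (forall j, s1 (w j) = b j) ->
  (forall v, (forall j, w j <> v) -> s2 v = s v) -> (forall j, s2 (w j) = b j) ->
  s1 = s2.
Proof.
move=> s1_off s1w s2_off s2w; apply: functional_extensionality => v.
have [[j <-]|v_notw] := classic (exists j, w j = v); first by rewrite s1w s2w.
have v_off : forall j, w j <> v by move=> j wj; apply: v_notw; exists j.
by rewrite s1_off // s2_off.
Qed.

Lemma reassign_exists b : compatible b -> exists s' : 'I_k -> T,
  (forall v, (forall j, w j <> v) -> s' v = s v) /\ (forall j, s' (w j) = b j).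
Proof.
move=> b_comp; exists (fun v => if [pick j | w j == v] is Some j then b j else s v).
split=> [v v_off|j]; case: pickP => [j' /eqP|] //.
- by move/v_off.
- exact: b_comp.
- by move/(_ j); rewrite eqxx.
Qed.

Lemma defined_rel_ext Q1 Q2 b :
  (forall s', Q1 s' <-> Q2 s') -> defined_rel Q1 b <-> defined_rel Q2 b.
Proof.
by move=> Q12; split=> -[s' [s'_off [s'w Qs']]]; exists s'; do 2 split=> //; apply/Q12.
Qed.

Lemma defined_relN Q1 Q2 b : (forall s', Q2 s' <-> ~ Q1 s') ->
  defined_rel Q2 b <-> compatible b /\ ~ defined_rel Q1 b.
Proof.
move=> Q21; split.
- move=> Q2b; split; first exact: defined_rel_compatible Q2b.
  case: Q2b => s1 [s1_off [s1w Q2s1]] [s2 [s2_off [s2w Q1s2]]].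
  by move: Q2s1; rewrite (reassign_uniq _ _ _ s1_off s1w s2_off s2w) Q21.
- case=> /reassign_exists[s' [s'_off s'w]] notQ1b.
  exists s'; do 2 split=> //; apply/Q21 => Q1s'; apply: notQ1b; by exists s'.
Qed.

End DefinedRelation.

Lemma sat_FQ (S : Type) (arS : S -> nat) (k : nat) (A : structure S arS)
    (tau : finType) (ar : tau -> nat) K (vars : forall R : tau, 'I_(ar R) -> 'I_k)
    (psi : tau -> fml S arS k) (s : 'I_k -> dom A) :
  sat A (FQ tau ar K vars psi) s =
  K (Structure ar (dom A) (fun R => defined_rel s (vars R) (sat A (psi R)))).
Proof. by []. Qed.

Section ConstantTuple.
Context {k : nat} {T : Type} (s : 'I_k -> T) {m : nat} (i : 'I_k).

Lemma defined_rel_const_upd (j0 : 'I_m) Q a :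
  defined_rel s (fun _ : 'I_m => i) Q (fun=> a) <-> Q (upd k T s i a).
Proof.
split=> [[s' [s'_off [s'i Qs']]]|Qsa].
- suff -> : upd k T s i a = s' by [].
  apply: functional_extensionality => v; rewrite /upd; case: eqP => [->|v_i].
    by rewrite (s'i j0).
  by rewrite s'_off // => j /esym.
- exists (upd k T s i a); split; last by split=> // j; rewrite /upd eqxx.
  by move=> v v_off; rewrite /upd; case: eqP => // /esym /v_off.
Qed.

Lemma defined_rel_const_exists Q (b : 'I_m -> T) :
  defined_rel s (fun=> i) Q b -> exists a, Q (upd k T s i a).
Proof.
case=> s' [s'_off [_ Qs']]; exists (s' i).
suff -> : upd k T s i (s' i) = s' by [].
apply: functional_extensionality => v; rewrite /upd; case: eqP => [->|v_i] //.
by rewrite s'_off // => j /esym.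
Qed.

End ConstantTuple.

Definition const_ar (n : nat) : unit -> nat := fun=> n.

Definition exists_class (n : nat) (D : structure unit (const_ar n)) : Prop :=
  exists b, rel D tt b.

Definition forall_class (n : nat) (D : structure unit (const_ar n)) : Prop :=
  forall a : dom D, rel D tt (fun=> a).

Lemma qarity_const_ar (n : nat) : qarity unit (const_ar n) = n.
Proof. by rewrite /qarity big_const card_unit /= maxn0. Qed.

Lemma exists_class_bij_closed (n : nat) : bij_closed unit (const_ar n) (exists_class n).
Proof. by move=> C D f [_ f_hom] [b Cb]; exists (f \o b); apply: f_hom. Qed.

Lemma forall_class_bij_closed (n : nat) : bij_closed unit (const_ar n) (forall_class n).
Proof.
move=> C D f [[g _ gK] f_hom] C_full a.
have -> : (fun=> a) = f \o (fun=> g a) :> ('I_n -> dom D).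
  by apply: functional_extensionality => j /=; rewrite gK.
exact: f_hom.
Qed.

Section FirstOrderQuantifiers.
Context {S : Type} {arS : S -> nat} {k : nat} (n : nat).

Definition Qexists (i : 'I_k) (p : fml S arS k) : fml S arS k :=
  FQ unit (const_ar n) (exists_class n) (fun _ _ => i) (fun=> p).

Definition Qforall (i : 'I_k) (p : fml S arS k) : fml S arS k :=
  FQ unit (const_ar n) (forall_class n) (fun _ _ => i) (fun=> p).

Lemma in_Lb_Qexists i p : in_Lb n p -> in_Lb n (Qexists i p).
Proof.
by split; [apply: exists_class_bij_closed|rewrite qarity_const_ar].
Qed.

Lemma in_Lb_Qforall i p : in_Lb n p -> in_Lb n (Qforall i p).
Proof.
by split; [apply: forall_class_bij_closed|rewrite qarity_const_ar].
Qed.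

Hypothesis n_gt0 : 0 < n.

Lemma free_Qexists i p v : free v (Qexists i p) <-> v <> i /\ free v p.
Proof.
split=> [[[] [v_i p_v]]|[v_i p_v]].
  by split=> // vi; apply: (v_i (Ordinal n_gt0)); rewrite vi.
by exists tt; split=> // j iv; apply: v_i.
Qed.

Lemma free_Qforall i p v : free v (Qforall i p) <-> v <> i /\ free v p.
Proof. exact: free_Qexists. Qed.

Variable A : structure S arS.

Lemma sat_Qexists i p (s : 'I_k -> dom A) :
  sat A (Qexists i p) s <-> exists a, sat A p (upd k (dom A) s i a).
Proof.
rewrite sat_FQ; split=> [[b /defined_rel_const_exists]|[a pa]] //.
by exists (fun=> a); apply/(defined_rel_const_upd _ _ (Ordinal n_gt0)).
Qed.

Lemma sat_Qforall i p (s : 'I_k -> dom A) :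
  sat A (Qforall i p) s <-> forall a, sat A p (upd k (dom A) s i a).
Proof.
have const_upd := defined_rel_const_upd s i (Ordinal n_gt0).
by rewrite sat_FQ; split=> pa a; [apply/const_upd/pa|apply/const_upd/pa].
Qed.

End FirstOrderQuantifiers.

Definition dup_ar {tau : finType} (ar : tau -> nat) (R : tau + tau) : nat :=
  match R with inl R | inr R => ar R end.

Section SplitClass.
Context {k : nat} {tau : finType} {ar : tau -> nat}.
Variable vars : forall R : tau, 'I_(ar R) -> 'I_k.

Definition dup_vars (R : tau + tau) : 'I_(dup_ar ar R) -> 'I_k :=
  match R with inl R | inr R => vars R end.

Lemma qarity_dup_ar : qarity (tau + tau)%type (dup_ar ar) = qarity tau ar.
Proof. by rewrite /qarity big_sumType /= maxnn. Qed.

(* The copy [inl R] carries R and [inr R] its complement among the tuples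
   compatible with [vars R].  Bijective homomorphisms may add tuples to both
   copies, so only the existence of a complementary substructure in [P] is
   required. *)
Definition split_class (P : structure tau ar -> Prop)
    (D : structure (tau + tau) (dup_ar ar)) : Prop :=
  exists C : structure tau ar, P C /\
    (forall R t, rel C R t -> compatible (vars R) t) /\
    exists f : dom C -> dom D, bijective f /\
      forall R (t : 'I_(ar R) -> dom C), compatible (vars R) t ->
        (rel C R t -> rel D (inl R) (f \o t)) /\
        (~ rel C R t -> rel D (inr R) (f \o t)).

Lemma split_class_bij_closed P : bij_closed (tau + tau) (dup_ar ar) (split_class P).
Proof.
move=> D E g [g_bij g_hom] [C [PC [C_comp [f [f_bij f_hom]]]]].
exists C; split=> //; split=> //; exists (g \o f); split; first exact: bij_comp.
move=> R t t_comp; have [f_pos f_neg] := f_hom R t t_comp.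
by split=> [/f_pos|/f_neg]; [apply: (g_hom (inl R))|apply: (g_hom (inr R))].
Qed.

Lemma split_class_exact P (T : finType) rD
    (rE : forall R : tau, ('I_(ar R) -> T) -> Prop) :
  iso_closed tau ar P ->
  (forall R b, rD (inl R) b <-> rE R b) ->
  (forall R b, rD (inr R) b <-> compatible (vars R) b /\ ~ rE R b) ->
  (forall R b, rE R b -> compatible (vars R) b) ->
  split_class P (Structure (dup_ar ar) T rD) <-> P (Structure ar T rE).
Proof.
move=> P_iso pos neg rE_comp; split.
- case=> C [PC [C_comp [f [f_bij f_hom]]]].
  apply: (P_iso C (Structure ar T rE) f) => //; split=> // R t /=.
  have [t_comp|t_incomp] := classic (compatible (vars R) t).
    have [f_pos f_neg] := f_hom R t t_comp.
    split=> [/f_pos/pos //|Eft]; apply: NNPP => /f_neg/neg[_]; exact.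
  split=> [/C_comp //|/rE_comp ft_comp]; exfalso; apply: t_incomp => j j' jj'.
  exact/(bij_inj f_bij)/ft_comp.
- move=> PE; exists (Structure ar T rE); split=> //; split; first exact: rE_comp.
  exists id; split; first by exists id.
  by move=> R t t_comp; split=> [/pos|notEt]; last apply/neg.
Qed.

End SplitClass.

Section NegationNormalForm.
Context {S : Type} {arS : S -> nat} {k : nat} (n : nat).

Fixpoint nnf (b : bool) (phi : fml S arS k) : fml S arS k :=
  match phi with
  | FEq i j => if b then FEq i j else FNot (FEq i j)
  | FRel R v => if b then FRel R v else FNot (FRel R v)
  | FNot p => nnf (~~ b) p
  | FAnd J F => if b then FAnd J (fun x => nnf true (F x))
                else FOr J (fun x => nnf false (F x))
  | FOr J F => if b then FOr J (fun x => nnf true (F x))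
               else FAnd J (fun x => nnf false (F x))
  | FEx i p => (if b then Qexists n else Qforall n) i (nnf b p)
  | FAll i p => (if b then Qforall n else Qexists n) i (nnf b p)
  | FQ tau ar K vars psi =>
      FQ (tau + tau)%type (dup_ar ar)
         (split_class vars (if b then K else fun C => ~ K C)) (dup_vars vars)
         (fun R => match R with
                   | inl R => nnf true (psi R)
                   | inr R => nnf false (psi R) end)
  end.

Lemma nnf_in_Lb (b : bool) (phi : fml S arS k) : in_Linf n phi -> in_Lb n (nnf b phi).
Proof.
elim: phi b => [i j|R v|p IH|J F IH|J F IH|i p IH|i p IH|tau ar K vars psi IH] b /=.
- by case: b.
- by case: b.
- exact: IH.
- by case: b => F_Linf x; apply: IH.
- by case: b => F_Linf x; apply: IH.
- by move=> /(IH b); case: b; [apply: in_Lb_Qexists|apply: in_Lb_Qforall].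
- by move=> /(IH b); case: b; [apply: in_Lb_Qforall|apply: in_Lb_Qexists].
- case=> _ [ar_n psi_Linf]; split; first exact: split_class_bij_closed.
  by rewrite qarity_dup_ar; split=> // -[] R; apply: IH.
Qed.

Hypothesis n_gt0 : 0 < n.

Lemma free_nnf (b : bool) (phi : fml S arS k) v : free v (nnf b phi) <-> free v phi.
Proof.
elim: phi b => [i j|R w|p IH|J F IH|J F IH|i p IH|i p IH|tau ar K vars psi IH] b /=.
- by case: b.
- by case: b.
- exact: IH.
- by case: b; split=> -[x]; exists x; apply/IH; eassumption.
- by case: b; split=> -[x]; exists x; apply/IH; eassumption.
- by case: b; rewrite ?free_Qexists ?free_Qforall // IH.
- by case: b; rewrite ?free_Qexists ?free_Qforall // IH.
- split=> [[[] R [v_R /IH psi_v]]|[R [v_R /(IH R true) psi_v]]].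
  + by exists R.
  + by exists R.
  + by exists (inl R).
Qed.

Lemma sat_nnf (A : structure S arS) (phi : fml S arS k) : in_Linf n phi ->
  forall b s, sat A (nnf b phi) s <-> if b then sat A phi s else ~ sat A phi s.
Proof.
elim: phi => [i j|R v|p IH|J F IH|J F IH|i p IH|i p IH|tau ar K vars psi IH].
- by move=> _ [].
- by move=> _ [].
- move=> /IH IHp [|] s /=; rewrite IHp //=.
  by split=> [p_s []|/NNPP].
- move=> F_Linf [|] s /=; have IHF x := IH x (F_Linf x).
    by setoid_rewrite IHF.
  setoid_rewrite IHF => /=.
  by split=> [[x notFx] allF|/not_all_ex_not //]; apply/notFx/allF.
- move=> F_Linf [|] s /=; have IHF x := IH x (F_Linf x).
    by setoid_rewrite IHF.
  setoid_rewrite IHF => /=.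
  by split=> [notF [x Fx]|/not_ex_all_not //]; apply/notF/Fx.
- move=> /IH IHp [|] s.
    by rewrite sat_Qexists //=; setoid_rewrite IHp.
  rewrite sat_Qforall //=; setoid_rewrite IHp => /=.
  split=> [notp [a p_a]|/not_ex_all_not //]; exact/notp/p_a.
- move=> /IH IHp [|] s.
    by rewrite sat_Qforall //=; setoid_rewrite IHp.
  rewrite sat_Qexists //=; setoid_rewrite IHp => /=.
  split=> [[a notp_a] allp|/not_all_ex_not //]; exact/notp_a/allp.
- case=> K_iso [_ psi_Linf] b s; have IHpsi R := IH R (psi_Linf R).
  pose rel_psi R := defined_rel s (vars R) (sat A (psi R)).
  rewrite !sat_FQ (split_class_exact _ _ _ _ rel_psi).
  + by case: b.
  + by case: b; [apply: K_iso|apply: iso_closedN].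
  + by move=> R t /=; apply: defined_rel_ext => s'; apply: IHpsi.
  + by move=> R t /=; apply: defined_relN => s'; apply: IHpsi.
  + by move=> R t; apply: defined_rel_compatible.
Qed.

End NegationNormalForm.

Theorem lemma2p8 (n k : nat) (Hn : 1 <= n) :
  forall (S : Type) (arS : S -> nat),
    (forall phi : fml S arS k, in_Linf n phi ->
       exists psi : fml S arS k,
         in_Lb n psi /\ same_free phi psi /\ equivalent phi psi) /\
    (forall phi : fml S arS k, in_Lb n phi ->
       exists psi : fml S arS k,
         in_Linf n psi /\ same_free phi psi /\ equivalent phi psi).
Proof.
move=> S arS; split=> phi phi_L.
- exists (nnf n true phi); split; first exact: nnf_in_Lb.
  split=> [v|A s]; first by rewrite free_nnf.
  by rewrite (sat_nnf _ Hn A _ phi_L).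
- by exists phi; split; first exact: in_Lb_in_Linf.
Qed.
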